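(* Let $q$ be an odd prime power, $n$ a positive integer with $n\mid(q-1)$, $\lambda\in\mathbb{F}_q^{*}$ with multiplicative order dividing $\frac{q-1}{n}$, and let $\alpha_1,\dots,\alpha_n\in\mathbb{F}_q^{*}$ be the (pairwise distinct) roots of $x^n-\lambda$, i.e. $x^n-\lambda=\prod_{i=1}^n(x-\alpha_i)$, in some fixed order. Let $\ell\ge0$, $\boldsymbol\eta=(\eta_0,\dots,\eta_\ell)\in\mathbb{F}_q^{\ell+1}\setminus\{\boldsymbol0\}$, and let $k$ be an integer with $2\le k\le\frac{n-2\ell-1}{2}$. Let $\boldsymbol v=(v_1,\dots,v_n)$ with $v_i\in\{-1,1\}$ for $k\le i\le n$ and $v_i\in\mathbb{F}_q\setminus\{-1,0,1\}$ for $1\le i\le k-1$. Then the $( * )$-$(\mathcal{L},\mathcal{P})$-TGRS code $\mathcal{C}$ (defined in the context) is an LCD code, i.e. $\mathcal{C}\cap\mathcal{C}^{\perp}=\{\boldsymbol0\}$.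
   Context: The $( * )$-$(\mathcal{L},\mathcal{P})$-TGRS code is $\mathcal{C}=\{(v_1f(\alpha_1),\dots,v_nf(\alpha_n)) : f\in\mathcal{F}_{n,k,\boldsymbol\eta}\}$, where $\mathcal{F}_{n,k,\boldsymbol\eta}=\{\sum_{i=0}^{k-1}f_ix^i+f_0\sum_{j=0}^{\ell}\eta_jx^{k+j} : f_i\in\mathbb{F}_q\}$; equivalently it is generated by the $k\times n$ matrix whose first row is $\big(v_j(1+\sum_{t=0}^{\ell}\eta_t\alpha_j^{k+t})\big)_{j}$ and whose row $i$ ($1\le i\le k-1$) is $(v_j\alpha_j^{i})_j$. $\mathcal{C}^{\perp}$ is the dual with respect to the standard inner product $\langle\boldsymbol x,\boldsymbol y\rangle=\sum_i x_iy_i$. *)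

From HB Require Import structures.
From mathcomp Require Import all_boot all_order all_algebra all_field.
Set Implicit Arguments. Unset Strict Implicit. Unset Printing Implicit Defensive.
Import GRing.Theory.
Local Open Scope ring_scope.

(* The polynomial  f(x) = sum_{i<k} f_i x^i + f_0 * sum_{j<=ell} eta_j x^(k+j)
   of F_{n,k,eta}, given by its coefficient function f (only f_0..f_(k-1) matter). *)
Definition tgrs_poly (F : fieldType) (k ell : nat) (eta : 'I_ell.+1 -> F)
  (f : nat -> F) : {poly F} :=
  \sum_(i < k) f i *: 'X^i + f 0%N *: \sum_(j < ell.+1) eta j *: 'X^(k + j).

Definition tgrs_word (F : fieldType) (n k ell : nat) (alpha v : 'I_n -> F)
  (eta : 'I_ell.+1 -> F) (f : nat -> F) : 'rV[F]_n :=
  \row_(j < n) (v j * (tgrs_poly k eta f).[alpha j]).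

Definition in_tgrs (F : fieldType) (n k ell : nat) (alpha v : 'I_n -> F)
  (eta : 'I_ell.+1 -> F) (c : 'rV[F]_n) : Prop :=
  exists f : nat -> F, c = @tgrs_word F n k ell alpha v eta f.

Definition in_dual (F : fieldType) (n : nat) (C : 'rV[F]_n -> Prop)
  (c : 'rV[F]_n) : Prop :=
  forall x, C x -> \sum_(i < n) x 0 i * c 0 i = 0.

Definition LCD (F : fieldType) (n : nat) (C : 'rV[F]_n -> Prop) : Prop :=
  forall c, C c -> in_dual C c -> c = 0.

From HB Require Import structures.
From mathcomp Require Import all_boot all_order all_algebra all_field.
From mathcomp Require Import cyclic ring zify.
Import GRing.Theory.
Local Open Scope ring_scope.
Set Implicit Arguments. Unset Strict Implicit.

(* Let c = (v_i p(alpha_i)) lie in C and in its dual, and pair it with the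
   codeword of an arbitrary g.  The alpha_i are the n-th roots of lam, so their
   power sums vanish in degrees 0 < m < n; as deg (g p) < n this turns
   sum_i (g p)(alpha_i) into n g_0 p_0.  Since v_i^2 = 1 for i >= k, the pairing
   reads  n g_0 p_0 + sum_(1 <= i < k) (v_i^2 - 1) g(alpha_i) p(alpha_i) = 0
   with nonzero weights.  Testing it against g = x prod_(j <> i) (x - alpha_j) gives
   p(alpha_i) = 0, then against a g with g_0 = 1 gives p_0 = f_0 = 0.  Now
   deg p < k while p vanishes at the k distinct points 0, alpha_1, ...,
   alpha_(k-1), so p = 0. *)

Lemma card_natf_eq0 (F : finFieldType) : (#|F|%:R : F) = 0.
Proof.
(* x |-> x + 1 permutes F, so sum_x x = sum_x x + #|F|. *)
have := reindex_inj (op := +%R) (x := 0) (P := predT) (F := id) (addIr (1 : F)).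
rewrite big_split /= sumr_const cardT => /eqP.
by rewrite -subr_eq0 opprD addNKr oppr_eq0 => /eqP.
Qed.

Lemma dvdn_card_pred_natf_neq0 (F : finFieldType) (n : nat) :
  (n %| #|F|.-1)%N -> (n%:R : F) != 0.
Proof.
move=> n_dvd.
have card_gt0 : (0 < #|F|)%N by apply/card_gt0P; exists 0.
have card_pred : (#|F|.-1%:R : F) = -1.
  by apply/eqP; rewrite -addr_eq0 natr1 prednK // card_natf_eq0.
case/dvdnP: n_dvd card_pred => t ->; rewrite natrM.
by apply: contra_eq_neq => ->; rewrite mulr0 eq_sym oppr_eq0 oner_neq0.
Qed.

Lemma size_sum_scaleXn (R : nzRingType) (m : nat) (c : 'I_m -> R) :
  (size (\sum_(i < m) c i *: 'X^i)%R <= m)%N.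
Proof.
apply/leq_sizeP => j j_ge_m; rewrite coef_sum big1 // => i _.
by rewrite coefZ coefXn gtn_eqF ?mulr0 // (leq_trans (ltn_ord i)).
Qed.

Section TgrsPoly.

Variables (F : fieldType) (k ell : nat) (eta : 'I_ell.+1 -> F).

Lemma size_tgrs_poly f : (size (tgrs_poly k eta f) <= k + ell.+1)%N.
Proof.
rewrite /tgrs_poly -poly_def; apply: leq_trans (size_polyD _ _) _.
rewrite geq_max (leq_trans (size_poly _ _) (leq_addr _ _)) /=.
apply: leq_trans (size_scale_leq _ _) _.
rewrite (eq_bigr (fun j => 'X^k * (eta j *: 'X^j))); last first.
  by move=> j _; rewrite exprD scalerAr.
rewrite -mulr_sumr (leq_trans (size_polyMleq _ _)) // size_polyXn.
by rewrite leq_add2l size_sum_scaleXn.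
Qed.

Lemma coef0_tgrs_poly f : (0 < k)%N -> (tgrs_poly k eta f)`_0 = f 0%N.
Proof.
case: k => // k' _; rewrite /tgrs_poly -poly_def coefD coef_poly coefZ coef_sum /=.
by rewrite big1 ?mulr0 ?addr0 // => j _; rewrite coefZ coefXn mulr0.
Qed.

Lemma tgrs_poly_f0 f : f 0%N = 0 -> tgrs_poly k eta f = \poly_(i < k) f i.
Proof. by move=> f0; rewrite /tgrs_poly f0 scale0r addr0 poly_def. Qed.

Lemma tgrs_poly_coefK (r : {poly F}) :
  r`_0 = 0 -> (size r <= k)%N -> tgrs_poly k eta (fun i => r`_i) = r.
Proof.
move=> r0 r_small; rewrite tgrs_poly_f0 //.
apply/polyP => i; rewrite coef_poly; case: ltnP => // k_le_i.
by rewrite nth_default // (leq_trans r_small k_le_i).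
Qed.

End TgrsPoly.

Lemma separable_Xn_subC (R : fieldType) (n : nat) (c : R) :
  (n%:R : R) != 0 -> c != 0 -> separable_poly ('X^n - c%:P).
Proof.
case: n => [|n]; first by rewrite eqxx.
move=> n_neq0 c_neq0; rewrite unlock; apply/Bezout_coprimepP.
exists (- n.+1%:R, 'X); rewrite /= derivB derivXn derivC subr0.
have -> : - n.+1%:R * ('X^(n.+1) - c%:P) + 'X * ('X^n *+ n.+1) = (n.+1%:R * c)%:P.
  by rewrite rmorphM rmorph_nat exprS; ring.
by rewrite polyC_eqp1 mulf_neq0.
Qed.

Section BinomialRoots.

Variables (F : fieldType) (n : nat) (lam : F) (alpha : 'I_n -> F).
Hypotheses (natn_neq0 : (n%:R : F) != 0) (lam_neq0 : lam != 0).
Hypothesis Xn_subC_factor : 'X^n - lam%:P = \prod_(i < n) ('X - (alpha i)%:P).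

Lemma expn_eq_lam x : (x ^+ n == lam) = (x \in codom alpha).
Proof.
rewrite -subr_eq0; have := congr1 (horner^~ x) Xn_subC_factor.
rewrite !hornerE horner_prod => ->.
apply/prodf_eq0/codomP => [[i _]|[i ->]]; last by exists i; rewrite // hornerXsubC subrr.
by rewrite hornerXsubC subr_eq0 => /eqP ->; exists i.
Qed.

Lemma alpha_expn j : alpha j ^+ n = lam.
Proof. by apply/eqP; rewrite expn_eq_lam codom_f. Qed.

Lemma alpha_neq0 j : alpha j != 0.
Proof.
apply: contraNneq lam_neq0 => alpha0.
by rewrite -(alpha_expn j) alpha0 expr0n eqn0Ngt (leq_ltn_trans (leq0n j) (ltn_ord j)).
Qed.

Lemma uniq_codom_alpha : uniq (codom alpha).
Proof.
have := separable_Xn_subC natn_neq0 lam_neq0.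
rewrite Xn_subC_factor -(big_image _ _ alpha _ (fun x => 'X - x%:P)).
by rewrite separable_prod_XsubC.
Qed.

Lemma alpha_inj : injective alpha.
Proof. exact/injectiveP/uniq_codom_alpha. Qed.

Lemma sum_alpha_expr m : (0 < m < n)%N -> \sum_(j < n) alpha j ^+ m = 0.
Proof.
case/andP=> m_gt0 m_lt_n; have n_gt0 := ltn_trans m_gt0 m_lt_n.
pose a0 := alpha (Ordinal n_gt0).
have [z _ z_prim] : {z | z \in [seq x / a0 | x <- codom alpha] & n.-primitive_root z}.
  apply/sig2W/hasP/has_prim_root => //.
  - apply/allP => _ /mapP[x x_alpha ->]; rewrite unity_rootE exprMn exprVn.
    by move: x_alpha; rewrite -expn_eq_lam => /eqP ->; rewrite alpha_expn divff.
  - rewrite map_inj_uniq ?uniq_codom_alpha // => x y.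
    exact/mulIf/invr_neq0/alpha_neq0.
  - by rewrite size_map size_codom card_ord.
have z_neq0 : z != 0 by rewrite (prim_root_eq0 z_prim) -lt0n n_gt0.
(* Multiplication by z permutes the roots of 'X^n - lam. *)
have mulz_perm : perm_eq (codom alpha) [seq z * x | x <- codom alpha].
  have mulz_uniq : uniq [seq z * x | x <- codom alpha].
    by rewrite map_inj_uniq ?uniq_codom_alpha //; apply: mulfI.
  have mulz_sub : {subset [seq z * x | x <- codom alpha] <= codom alpha}.
    move=> _ /mapP[y y_alpha ->]; rewrite -expn_eq_lam exprMn (prim_expr_order z_prim).
    by rewrite mul1r expn_eq_lam.
  have [_ mulz_eq] := uniq_min_size mulz_uniq mulz_sub (eq_leq (esym (size_map _ _))).
  by apply: uniq_perm uniq_codom_alpha mulz_uniq _ => x; rewrite mulz_eq.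
rewrite -(big_image _ _ alpha _ (fun x => x ^+ m)); set S := \sum_(_ <- _) _.
have S_mulz : S = z ^+ m * S.
  rewrite {1}/S (perm_big _ mulz_perm) big_map mulr_sumr.
  by apply: eq_bigr => x _; rewrite exprMn.
have zm_neq1 : z ^+ m != 1 by rewrite -(prim_order_dvd z_prim) gtnNdvd.
have : (1 - z ^+ m) * S = 0 by rewrite mulrBl mul1r -S_mulz subrr.
by move/eqP; rewrite mulf_eq0 subr_eq0 eq_sym (negbTE zm_neq1) => /eqP.
Qed.

Lemma sum_horner_alpha (r : {poly F}) :
  (size r <= n)%N -> \sum_(j < n) r.[alpha j] = n%:R * r`_0.
Proof.
move=> r_small; have n_gt0 : (0 < n)%N.
  by rewrite lt0n; apply: contraNneq natn_neq0 => ->.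
under eq_bigr do rewrite (horner_coef_wide _ r_small).
rewrite exchange_big (bigD1 (Ordinal n_gt0)) //= [X in _ + X]big1 ?addr0.
  by under eq_bigr do rewrite expr0 mulr1; rewrite sumr_const card_ord mulr_natl.
move=> i i_neq0; rewrite -mulr_sumr sum_alpha_expr ?mulr0 // ltn_ord andbT lt0n.
by move: i_neq0; rewrite -val_eqE.
Qed.

Lemma tgrs_word_dot k ell (eta : 'I_ell.+1 -> F) (v : 'I_n -> F) f g :
  (2 * k + 2 * ell + 1 <= n)%N ->
  \sum_(i < n) tgrs_word k alpha v eta g 0 i * tgrs_word k alpha v eta f 0 i =
  n%:R * ((tgrs_poly k eta g)`_0 * (tgrs_poly k eta f)`_0)
  + \sum_(i < n) (v i ^+ 2 - 1) *
      ((tgrs_poly k eta g).[alpha i] * (tgrs_poly k eta f).[alpha i]).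
Proof.
move=> kn; set p := tgrs_poly k eta f; set q := tgrs_poly k eta g.
have qp_small : (size (q * p)%R <= n)%N.
  apply: leq_trans (size_polyMleq _ _) _.
  move: (size_tgrs_poly k eta g) (size_tgrs_poly k eta f); rewrite -/p -/q; lia.
rewrite -coef0M -(sum_horner_alpha qp_small) -big_split /=.
by apply: eq_bigr => i _; rewrite !mxE hornerM; ring.
Qed.

End BinomialRoots.

Section OrthogonalTgrs.

Variables (F : fieldType) (m ell : nat) (eta : 'I_ell.+1 -> F).
Variables (N : F) (beta d : 'I_m -> F) (f : nat -> F).
Hypotheses (N_neq0 : N != 0) (beta_inj : injective beta).
Hypotheses (beta_neq0 : forall i, beta i != 0) (d_neq0 : forall i, d i != 0).
Local Notation P g := (tgrs_poly m.+1 eta g).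
Hypothesis tgrs_orthogonal : forall g : nat -> F,
  N * ((P g)`_0 * (P f)`_0) + \sum_(i < m) d i * ((P g).[beta i] * (P f).[beta i]) = 0.

Lemma tgrs_root_beta i0 : (P f).[beta i0] = 0.
Proof.
(* Q is the polynomial of a codeword that kills all the nodes except beta i0. *)
pose Q := \prod_(i < m | i != i0) ('X - (beta i)%:P) * 'X.
have Q_small : (size Q <= m.+1)%N.
  rewrite size_mulX; last by apply/prodf_neq0 => i _; rewrite polyXsubC_eq0.
  rewrite -(@big_enum _ _ _ _ (predC1 i0)) size_prod_XsubC -cardE cardC1 card_ord.
  by have := ltn_ord i0; lia.
have Q_beta i : i != i0 -> Q.[beta i] = 0.
  by move=> i_neq_i0; rewrite hornerM horner_prod (bigD1 i) //= hornerXsubC subrr !mul0r.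
have Q_beta0 : Q.[beta i0] != 0.
  rewrite hornerM hornerX mulf_neq0 // horner_prod; apply/prodf_neq0 => i i_neq_i0.
  by rewrite hornerXsubC subr_eq0 (inj_eq beta_inj) eq_sym.
have Q0 : Q`_0 = 0 by rewrite coef0M coefX mulr0.
have := tgrs_orthogonal (fun i => Q`_i).
rewrite tgrs_poly_coefK // Q0 mul0r mulr0 add0r.
rewrite (bigD1 i0) //= big1 ?addr0 => [/eqP|i /Q_beta ->]; last by rewrite !mul0r mulr0.
by rewrite !mulf_eq0 (negbTE (d_neq0 i0)) (negbTE Q_beta0) => /eqP.
Qed.

Lemma tgrs_f0_eq0 : f 0%N = 0.
Proof.
have := tgrs_orthogonal (fun i => (i == 0)%:R).
rewrite !coef0_tgrs_poly // mul1r big1 ?addr0 => [/eqP|i _]; last first.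
  by rewrite tgrs_root_beta !mulr0.
by rewrite mulf_eq0 (negbTE N_neq0) => /eqP.
Qed.

Lemma tgrs_poly_eq0 : P f = 0.
Proof.
apply: contraTeq isT => Pf_neq0.
have Pf_roots : all (root (P f)) (0 :: codom beta).
  rewrite /= rootE horner_coef0 coef0_tgrs_poly // tgrs_f0_eq0 eqxx /=.
  by apply/allP => _ /codomP[i ->]; rewrite rootE tgrs_root_beta.
have roots_uniq : uniq (0 :: codom beta).
  apply/andP; split; last exact/injectiveP.
  by apply/codomP => -[i /esym /eqP]; rewrite (negbTE (beta_neq0 i)).
have := max_poly_roots Pf_neq0 Pf_roots roots_uniq.
rewrite tgrs_poly_f0 ?tgrs_f0_eq0 //=.
by rewrite size_codom card_ord ltnNge size_poly.
Qed.

End OrthogonalTgrs.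

Theorem theorem4p1 (F : finFieldType) (n : nat) (lam : F)
  (alpha : 'I_n -> F) (ell : nat) (eta : 'I_ell.+1 -> F) (k : nat)
  (v : 'I_n -> F) :
  odd #|F| ->
  (0 < n)%N ->
  (n %| #|F|.-1)%N ->
  lam != 0 ->
  lam ^+ (#|F|.-1 %/ n) = 1 ->
  'X^n - lam%:P = \prod_(i < n) ('X - (alpha i)%:P) ->
  (exists j, eta j != 0) ->
  (2 <= k)%N ->
  (2 * k + 2 * ell + 1 <= n)%N ->
  (forall i : 'I_n, (k.-1 <= i)%N -> v i = 1 \/ v i = -1) ->
  (forall i : 'I_n, (i < k.-1)%N -> [/\ v i != -1, v i != 0 & v i != 1]) ->
  LCD (@in_tgrs F n k ell alpha v eta).
Proof.
move=> _ _ n_dvd lam_neq0 _ Xn_subC_factor _ k_ge2 kn v_unit v_nodes _ [f ->] f_dual.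
have natn_neq0 := dvdn_card_pred_natf_neq0 n_dvd.
case: k k_ge2 kn v_unit v_nodes f_dual => // m _ kn v_unit v_nodes f_dual.
have m_le_n : (m <= n)%N by lia.
pose w := widen_ord m_le_n.
suff Pf0 : tgrs_poly m.+1 eta f = 0.
  by apply/rowP => j; rewrite !mxE Pf0 horner0 mulr0.
apply: (@tgrs_poly_eq0 _ _ _ _ n%:R (alpha \o w) (fun i => v (w i) ^+ 2 - 1)) => //.
- move=> i j /(alpha_inj natn_neq0 lam_neq0 Xn_subC_factor) wij.
  by apply: val_inj; have /= := congr1 val wij.
- by move=> i; apply: alpha_neq0 lam_neq0 Xn_subC_factor _.
- move=> i; have [v_neqN1 _ v_neq1] := v_nodes (w i) (ltn_ord i).
  by rewrite subr_sqr_1 mulf_neq0 // ?subr_eq0 ?addr_eq0.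
- move=> g; rewrite -[RHS](f_dual _ (ex_intro _ g erefl)).
  rewrite (tgrs_word_dot natn_neq0 lam_neq0 Xn_subC_factor) //.
  rewrite [\sum_(i < n) _](bigID (fun i : 'I_n => (i < m)%N)) /= big_ord_narrow.
  rewrite [\sum_(i < n | _) _]big1 ?addr0 // => i; rewrite -leqNgt => /v_unit [] ->.
    by rewrite expr1n subrr mul0r.
  by rewrite sqrrN expr1n subrr mul0r.
Qed.
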